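(* Let $c_{\min}\le c_{\max}$ and $d_{\min}\le d_{\max}$ be integers, $T=\{c_{\min},\dots,c_{\max}\}\times\{d_{\min},\dots,d_{\max}\}$, $a:T\to[0,1]$ and $p:T\to\mathbb{R}$. For $(c,d),(c',d')\in T$ write $(c,d)\to(c',d')$ for the inequality $p_{c,d}-c\,a_{c,d}\ge p_{c',d'}-c\,a_{c',d'}$. Assume $a$ is monotonic: $a_{c,d}\ge a_{c',d'}$ whenever $c\le c'$ and $d\ge d'$. Suppose that for every $(c,d)\in T$: $(c,d)\to(c+1,d)$ if $c<c_{\max}$; $(c,d)\to(c-1,d)$ if $c>c_{\min}$; $(c,d)\to(c,d-1)$ if $d>d_{\min}$. Then $(c,d)\to(c',d')$ holds for all $(c,d)\in T$ and all $(c',d')\in T$ with $d'\le d$.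
   Context: $a_{c,d}$ is the interim winning probability and $p_{c,d}$ the expected payment of a bidder reporting type $(c,d)$ (forwarding cost $c$, predicted path duration $d$); a bidder of true cost $c$ winning with probability $a$ has expected cost $c\,a$. The inequality $(c,d)\to(c',d')$ is the incentive-compatibility (IC) constraint for a bidder of true type $(c,d)$ misreporting $(c',d')$. In the paper, IC constraints for over-reporting the path duration ($d'>d$) are excluded from consideration by a separate argument, so ''all IC constraints'' means all constraints $(c,d)\to(c',d')$ with $d'\le d$. *)

From Stdlib Require Import Reals ZArith.
Open Scope R_scope.

Definition inT (cmin cmax dmin dmax c d : Z) : Prop :=
  (cmin <= c <= cmax)%Z /\ (dmin <= d <= dmax)%Z.

Definition IC (a p : Z -> Z -> R) (c d c' d' : Z) : Prop :=
  p c d - IZR c * a c d >= p c' d' - IZR c * a c' d'.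

(** Every constraint reduces to the local ones along a staircase path: first
    lower the reported duration from [d] to [d'] one step at a time keeping the
    true cost, then move the reported cost towards [c'] one step at a time.
    Each step is a local constraint of the intermediate type, and monotonicity
    of [a] makes it transfer to the true type [c]: the correction term
    [(k - c) (a_k - a_k')] has a sign because the path moves away from [c] in
    the direction in which [a] decreases. *)

From Stdlib Require Import Reals ZArith Lra Lia.
Open Scope R_scope.

Lemma IC_refl (a p : Z -> Z -> R) (c d : Z) : IC a p c d c d.
Proof. unfold IC; lra. Qed.

Lemma IC_trans (a p : Z -> Z -> R) (c d k e k' e' : Z) :
  IC a p c d k e -> IC a p k e k' e' ->
  0 <= (IZR k - IZR c) * (a k e - a k' e') -> IC a p c d k' e'.
Proof. unfold IC; nra. Qed.

Lemma IC_trans_same_cost (a p : Z -> Z -> R) (c d e c' e' : Z) :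
  IC a p c d c e -> IC a p c e c' e' -> IC a p c d c' e'.
Proof.
  intros H1 H2; apply (IC_trans a p c d c e c' e' H1 H2).
  rewrite Rminus_diag, Rmult_0_l; apply Rle_refl.
Qed.

Section LocalToGlobal.

Variables (cmin cmax dmin dmax : Z) (a p : Z -> Z -> R).
Let inBox := inT cmin cmax dmin dmax.

Hypothesis Hmono : forall c d c' d', inBox c d -> inBox c' d' ->
  (c <= c')%Z -> (d' <= d)%Z -> a c d >= a c' d'.
Hypothesis Hup : forall c d, inBox c d -> (c < cmax)%Z -> IC a p c d (c + 1)%Z d.
Hypothesis Hdown : forall c d, inBox c d -> (cmin < c)%Z -> IC a p c d (c - 1)%Z d.
Hypothesis Hdd : forall c d, inBox c d -> (dmin < d)%Z -> IC a p c d c (d - 1)%Z.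

Lemma IC_column (c d d' : Z) :
  inBox c d -> (d' <= d)%Z -> inBox c d' -> IC a p c d c d'.
Proof.
  intros Hcd; revert d'.
  apply (Z.left_induction (fun e => inBox c e -> IC a p c d c e)).
  - intros x y ->; tauto.
  - intros _; apply IC_refl.
  - intros e He IH Hce.
    assert (Hce1 : inBox c (Z.succ e)) by (unfold inBox, inT in *; lia).
    apply (IC_trans_same_cost a p c d (Z.succ e)); [exact (IH Hce1) |].
    replace e with (Z.succ e - 1)%Z at 2 by lia.
    apply Hdd; [exact Hce1 | unfold inBox, inT in *; lia].
Qed.

Lemma IC_row_up (c d e c' : Z) :
  inBox c e -> IC a p c d c e -> (c <= c')%Z -> inBox c' e -> IC a p c d c' e.
Proof.
  intros Hce Hstart; revert c'.
  apply (Z.le_ind (fun k => inBox k e -> IC a p c d k e)).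
  - intros x y ->; tauto.
  - intros _; exact Hstart.
  - intros k Hck IH Hk1.
    assert (Hk : inBox k e) by (unfold inBox, inT in *; lia).
    rewrite <- Z.add_1_r in *.
    apply (IC_trans a p c d k e); [exact (IH Hk) | |].
    + apply Hup; [exact Hk | unfold inBox, inT in *; lia].
    + assert (Hck' : IZR c <= IZR k) by (apply IZR_le; exact Hck).
      assert (Hdec := Hmono k e (k + 1) e Hk Hk1 ltac:(lia) ltac:(lia)).
      apply Rmult_le_pos; lra.
Qed.

Lemma IC_row_down (c d e c' : Z) :
  inBox c e -> IC a p c d c e -> (c' <= c)%Z -> inBox c' e -> IC a p c d c' e.
Proof.
  intros Hce Hstart; revert c'.
  apply (Z.left_induction (fun k => inBox k e -> IC a p c d k e)).
  - intros x y ->; tauto.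
  - intros _; exact Hstart.
  - intros k Hkc IH Hk.
    assert (Hk1 : inBox (Z.succ k) e) by (unfold inBox, inT in *; lia).
    apply (IC_trans a p c d (Z.succ k) e); [exact (IH Hk1) | |].
    + replace k with (Z.succ k - 1)%Z at 2 by lia.
      apply Hdown; [exact Hk1 | unfold inBox, inT in *; lia].
    + assert (Hck' : IZR (Z.succ k) <= IZR c) by (apply IZR_le; lia).
      assert (Hdec := Hmono k e (Z.succ k) e Hk Hk1 ltac:(lia) ltac:(lia)).
      replace ((IZR (Z.succ k) - IZR c) * (a (Z.succ k) e - a k e))
        with ((IZR c - IZR (Z.succ k)) * (a k e - a (Z.succ k) e)) by ring.
      apply Rmult_le_pos; lra.
Qed.

End LocalToGlobal.

Theorem theorem1 (cmin cmax dmin dmax : Z) (a p : Z -> Z -> R)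
  (Hc : (cmin <= cmax)%Z) (Hd : (dmin <= dmax)%Z)
  (Ha01 : forall c d, inT cmin cmax dmin dmax c d -> 0 <= a c d <= 1)
  (Hmono : forall c d c' d', inT cmin cmax dmin dmax c d ->
     inT cmin cmax dmin dmax c' d' -> (c <= c')%Z -> (d' <= d)%Z ->
     a c d >= a c' d')
  (Hup : forall c d, inT cmin cmax dmin dmax c d -> (c < cmax)%Z ->
     IC a p c d (c + 1)%Z d)
  (Hdown : forall c d, inT cmin cmax dmin dmax c d -> (cmin < c)%Z ->
     IC a p c d (c - 1)%Z d)
  (Hdd : forall c d, inT cmin cmax dmin dmax c d -> (dmin < d)%Z ->
     IC a p c d c (d - 1)%Z) :
  forall c d c' d', inT cmin cmax dmin dmax c d ->
    inT cmin cmax dmin dmax c' d' -> (d' <= d)%Z -> IC a p c d c' d'.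
Proof.
  intros c d c' d' Hcd Hc'd' Hdd'.
  assert (Hcd' : inT cmin cmax dmin dmax c d') by (unfold inT in *; lia).
  pose proof (IC_column cmin cmax dmin dmax a p Hdd c d d' Hcd Hdd' Hcd') as Hcol.
  destruct (Z.le_ge_cases c c') as [Hle | Hge].
  - exact (IC_row_up cmin cmax dmin dmax a p Hmono Hup c d d' c' Hcd' Hcol Hle Hc'd').
  - exact (IC_row_down cmin cmax dmin dmax a p Hmono Hdown c d d' c' Hcd' Hcol Hge Hc'd').
Qed.
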